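(* A ring $R$ is strongly nil-clean if and only if $R$ is a GSWNC ring and $R$ is a UU ring.
   Context: All rings are associative with identity. An element $a$ of a ring is strongly nil-clean if $a = e + q$ with $e$ idempotent, $q$ nilpotent and $eq = qe$; it is strongly weakly nil-clean if there exist an idempotent $e$ and a nilpotent $q$ with $eq = qe$ such that $a = q + e$ or $a = q - e$. A ring is strongly nil-clean if all its elements are strongly nil-clean; it is GSWNC if every non-invertible element is strongly weakly nil-clean. A ring $R$ is UU if every unit is unipotent, i.e., $U(R) \subseteq 1 + {\rm Nil}(R)$. *)

From mathcomp Require Import all_boot all_order all_algebra.
Set Implicit Arguments. Unset Strict Implicit. Unset Printing Implicit Defensive.
Import GRing.Theory.
Local Open Scope ring_scope.

Definition idempotent {R : unitRingType} (e : R) : Prop := e * e = e.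
Definition nilpotent {R : unitRingType} (q : R) : Prop := exists n : nat, q ^+ n = 0.

Definition strongly_nil_clean_elt {R : unitRingType} (a : R) : Prop :=
  exists e q : R, idempotent e /\ nilpotent q /\ e * q = q * e /\ a = e + q.

Definition strongly_weakly_nil_clean_elt {R : unitRingType} (a : R) : Prop :=
  exists e q : R, idempotent e /\ nilpotent q /\ e * q = q * e /\
    (a = q + e \/ a = q - e).

Definition strongly_nil_clean_ring (R : unitRingType) : Prop :=
  forall a : R, strongly_nil_clean_elt a.

Definition GSWNC_ring (R : unitRingType) : Prop :=
  forall a : R, a \isn't a GRing.unit -> strongly_weakly_nil_clean_elt a.

Definition UU_ring (R : unitRingType) : Prop :=
  forall u : R, u \is a GRing.unit -> nilpotent (u - 1).

(* A strongly nil-clean unit u = e + q has e = u - q, again a unit (a unit minus a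
   commuting nilpotent), and an idempotent unit is 1; hence u - 1 = q is nilpotent.
   Conversely, in a UU ring -2 = -1 - 1 is nilpotent, so a decomposition a = q - e
   can be rewritten as a = (q - 2e) + e, where q - 2e is a sum of commuting
   nilpotents; a unit u is 1 + (u - 1). *)
From Pilot Require Import Defs.
From mathcomp Require Import all_boot all_order all_algebra.
From mathcomp Require Import zify.
Import GRing.Theory.
Local Open Scope ring_scope.

Section NilCleanUnitRing.
Context {R : unitRingType}.
Implicit Types a x y u e q : R.

Lemma nilpotentM_comm x y : GRing.comm x y -> nilpotent x -> nilpotent (x * y).
Proof. by move=> cxy [n xn0]; exists n; rewrite exprMn_comm // xn0 mul0r. Qed.

Lemma nilpotentD_comm x y :
  GRing.comm x y -> nilpotent x -> nilpotent y -> nilpotent (x + y).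
Proof.
move=> cxy [n xn0] [m ym0]; exists (n + m)%N.
rewrite exprDn_comm //; apply: big1 => i _.
have [n_le | lt_n] := leqP n (n + m - i).
  by rewrite -(subnKC n_le) exprD xn0 !mul0r mul0rn.
have m_le : (m <= i)%N by have := ltn_ord i; lia.
by rewrite -(subnKC m_le) exprD ym0 mul0r mulr0 mul0rn.
Qed.

Lemma unitr_1B_nilpotent x : nilpotent x -> 1 - x \is a GRing.unit.
Proof.
move=> [n xn0]; set S := \sum_(i < n) x ^+ i.
have cxS : GRing.comm x S by apply: commr_sum => i _; apply: commrX.
have inv_r : (1 - x) * S = 1.
  by rewrite -opprB mulNr -subrX1 xn0 sub0r opprK.
apply/unitrP; exists S; split=> //.
by rewrite mulrBr mulr1 -cxS -inv_r mulrBl mul1r.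
Qed.

Lemma unitrB_nilpotent_comm u q :
  u \is a GRing.unit -> GRing.comm u q -> nilpotent q -> u - q \is a GRing.unit.
Proof.
move=> Uu cuq nil_q.
have -> : u - q = (1 - q * u^-1) * u by rewrite mulrBl mul1r mulrVK.
rewrite unitrMl //; apply/unitr_1B_nilpotent/nilpotentM_comm => //.
exact/commrV/commr_sym.
Qed.

Lemma idempotent_unit_eq1 e : Defs.idempotent e -> e \is a GRing.unit -> e = 1.
Proof. by move=> idem_e Ue; apply: (mulrI Ue); rewrite mulr1. Qed.

Lemma idempotent_eq1_of_unit_add_nilpotent e q :
  Defs.idempotent e -> nilpotent q -> GRing.comm e q ->
  e + q \is a GRing.unit -> e = 1.
Proof.
move=> idem_e nil_q ceq U_eq; apply: idempotent_unit_eq1 => //.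
rewrite -(addrK q e); apply: unitrB_nilpotent_comm => //.
by rewrite /GRing.comm mulrDl mulrDr ceq.
Qed.

Lemma UU_nilpotent_m2 : UU_ring R -> nilpotent (- 2%:R : R).
Proof. by move=> UU_R; rewrite mulr2n opprD; apply/UU_R/unitrN1. Qed.

Lemma strongly_weakly_nil_clean_of_strongly a :
  strongly_nil_clean_elt a -> strongly_weakly_nil_clean_elt a.
Proof.
move=> [e [q [idem_e [nil_q [ceq ->]]]]].
by exists e, q; do 3 split=> //; left; rewrite addrC.
Qed.

Lemma strongly_nil_clean_of_nilpotent_subr1 a :
  nilpotent (a - 1) -> strongly_nil_clean_elt a.
Proof.
move=> nil_a1; exists 1, (a - 1); split; first exact: mulr1.
by do 2 split=> //; [rewrite mul1r mulr1 | rewrite addrC subrK].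
Qed.

Lemma strongly_nil_clean_unit_nilpotent_subr1 u :
  u \is a GRing.unit -> strongly_nil_clean_elt u -> nilpotent (u - 1).
Proof.
move=> Uu [e [q [idem_e [nil_q [ceq def_u]]]]].
have e1 : e = 1.
  by apply: (idempotent_eq1_of_unit_add_nilpotent _ _ idem_e nil_q ceq); rewrite -def_u.
by rewrite def_u e1 (addrC 1) addrK.
Qed.

Lemma strongly_nil_clean_nilpotent_subr_idempotent e q :
  nilpotent (- 2%:R : R) -> Defs.idempotent e -> nilpotent q -> GRing.comm e q ->
  strongly_nil_clean_elt (q - e).
Proof.
move=> nil_m2 idem_e nil_q ceq.
have c2e : GRing.comm (- 2%:R) e by apply/commr_sym/commrN/commr_nat.
have cq2e : GRing.comm q (- 2%:R * e).
  by apply: commrM => //; apply/commrN/commr_nat.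
exists e, (q + - 2%:R * e); do 2 split=> //.
  exact/nilpotentD_comm/nilpotentM_comm.
split; first by rewrite mulrDl mulrDr ceq mulrA -c2e.
by rewrite mulNr mulr2n mulrDl mul1r opprD addrCA addNKr.
Qed.

End NilCleanUnitRing.

Theorem lemma2p31 (R : unitRingType) :
  strongly_nil_clean_ring R <-> GSWNC_ring R /\ UU_ring R.
Proof.
split=> [snc_R | [gswnc_R UU_R] a].
  split=> [a _ | u Uu]; first exact/strongly_weakly_nil_clean_of_strongly.
  exact: strongly_nil_clean_unit_nilpotent_subr1.
have [Ua | nUa] := boolP (a \is a GRing.unit).
  exact/strongly_nil_clean_of_nilpotent_subr1/UU_R.
have [e [q [idem_e [nil_q [ceq [-> | ->]]]]]] := gswnc_R a nUa.
  by exists e, q; do 3 split=> //; rewrite addrC.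
exact: strongly_nil_clean_nilpotent_subr_idempotent (UU_nilpotent_m2 UU_R) _ _ _.
Qed.
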